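(* Let $n\ge 3$. The restriction map $\rho$, sending an optimal acyclic matching $V$ on $\Delta^n$ to the set of pairs of $V$ lying in $\Delta^n_{(n-2)}$, is a surjection from the set of optimal acyclic matchings on $\Delta^n$ onto the set of optimal acyclic matchings on $\Delta^n_{(n-2)}$, and every fiber of $\rho$ has exactly $n+1$ elements. Consequently $$f(n)=(n+1)\cdot\bigl|\{\text{top-dimensional simplices of }\mathcal{M}(\Delta^n_{(n-2)})\}\bigr|,$$ where $f(n)$ is the number of optimal acyclic matchings on $\Delta^n$.
   Context: All simplicial complexes are finite abstract simplicial complexes; simplices are nonempty. $\Delta^n$ is the simplicial complex of all nonempty subsets of an $(n+1)$-element vertex set; $\Delta^n_{(k)}$ denotes its $k$-skeleton. The Hasse diagram $\mathcal{H}(K)$ of $K$ is the directed graph whose vertices are the simplices of $K$, with an edge $\sigma\to\tau$ whenever $\sigma\subsetneq\tau$ and $\dim\tau=\dim\sigma+1$. A matching on $\mathcal{H}(K)$ is a set $W$ of edges of $\mathcal{H}(K)$, no two sharing a vertex; an edge $\sigma\to\tau$ in $W$ is called a pair $(\sigma,\tau)$, and a simplex lying in no pair is called critical. $W$ is acyclic if the directed graph obtained from $\mathcal{H}(K)$ by reversing every edge in $W$ has no directed cycle. The complex of discrete Morse matchings $\mathcal{M}(K)$ is the simplicial complex whose vertices are the edges of $\mathcal{H}(K)$ and whose simplices are the nonempty acyclic matchings (a matching with $k+1$ pairs is a $k$-simplex). An acyclic matching is optimal if it minimizes the total number of critical simplices among all acyclic matchings on $K$; equivalently it is a top-dimensional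 simplex of $\mathcal{M}(K)$. *)

From mathcomp Require Import all_boot.
Set Implicit Arguments. Unset Strict Implicit. Unset Printing Implicit Defensive.

Section Defs.
Variable T : finType.

(* A finite abstract simplicial complex on vertex type T is given by its set of
   simplices K : {set {set T}} (nonempty subsets, closed under nonempty subsets).
   A simplex s has dimension #|s| - 1. *)

Definition hasse_edge (K : {set {set T}}) (p : {set T} * {set T}) : bool :=
  [&& p.1 \in K, p.2 \in K, p.1 \proper p.2 & #|p.2| == #|p.1|.+1].

Definition share_vertex (p q : {set T} * {set T}) : bool :=
  [|| p.1 == q.1, p.1 == q.2, p.2 == q.1 | p.2 == q.2].

Definition matching (K : {set {set T}}) (W : {set {set T} * {set T}}) : bool :=
  [forall p in W, hasse_edge K p] &&
  [forall p in W, forall q in W, (p != q) ==> ~~ share_vertex p q].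

Definition modified_rel (K : {set {set T}}) (W : {set {set T} * {set T}})
  : rel {set T} :=
  fun x y => (hasse_edge K (x, y) && ((x, y) \notin W)) || ((y, x) \in W).

Definition has_directed_cycle (e : rel {set T}) : bool :=
  [exists x, exists y, e x y && connect e y x].

Definition acyclic_matching (K : {set {set T}}) (W : {set {set T} * {set T}})
  : bool :=
  matching K W && ~~ has_directed_cycle (modified_rel K W).

Definition critical (K : {set {set T}}) (W : {set {set T} * {set T}})
  : {set {set T}} :=
  [set s in K | [forall p in W, (p.1 != s) && (p.2 != s)]].

Definition optimal (K : {set {set T}}) (W : {set {set T} * {set T}}) : bool :=
  acyclic_matching K W &&
  [forall W' : {set {set T} * {set T}},
     acyclic_matching K W' ==> (#|critical K W| <= #|critical K W'|)].

(* top-dimensional simplices of the complex of discrete Morse matchings M(K):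
   simplices are nonempty acyclic matchings, a matching with k+1 pairs is a
   k-simplex; top-dimensional = of maximal dimension. *)
Definition M_top_simplex (K : {set {set T}}) (W : {set {set T} * {set T}})
  : bool :=
  [&& acyclic_matching K W, W != set0 &
   [forall W' : {set {set T} * {set T}},
     (acyclic_matching K W' && (W' != set0)) ==> (#|W'| <= #|W|)]].

Definition skeleton (K : {set {set T}}) (k : nat) : {set {set T}} :=
  [set s in K | #|s| <= k.+1].

Definition restrict (L : {set {set T}}) (W : {set {set T} * {set T}})
  : {set {set T} * {set T}} :=
  [set p in W | (p.1 \in L) && (p.2 \in L)].

End Defs.

Definition Delta (n : nat) : {set {set 'I_n.+1}} := [set s | s != set0].

Definition f (n : nat) : nat :=
  #|[set V : {set {set 'I_n.+1} * {set 'I_n.+1}} | optimal (Delta n) V]|.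

From mathcomp Require Import all_boot zify.
Set Implicit Arguments. Unset Strict Implicit. Unset Printing Implicit Defensive.

(* Write K for Delta^n and L for its (n-2)-skeleton; the simplices of K outside L are the
   top simplex and the n + 1 facets.  The cone from a vertex shows that optimal matchings on
   K have a single critical cell, so they pair the top simplex with some facet [facet i].

   On L, an acyclic matching W has a critical vertex, and its critical ridges (simplices of
   size n - 1) cross every cut of the vertex set: otherwise each crossing ridge, matched
   downwards, leads in the modified Hasse diagram to another crossing ridge.  So the
   critical ridges contain a spanning tree, and W has at least n + 1 critical cells.  A count
   shows that restricting an optimal matching on K leaves exactly n + 1 of them.

   Conversely, orienting such a tree towards a vertex i and matching every ridge with the
   facet missing its child, and [facet i] with the top simplex, extends an optimal W to an
   optimal matching on K.  It is the only extension pairing [facet i] with the top simplex: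
   a facet matched differently in two extensions leads, in the modified Hasse diagram of the
   first, to another such facet.  Hence each fibre of the restriction has n + 1 elements. *)

(** * Acyclic relations *)

Section Acyclicity.
Variable T : finType.
Local Notation U := {set T}.
Implicit Types (e : rel U) (mu : U -> nat).

Lemma connect_potential_le e mu :
  (forall x y, e x y -> mu x < mu y) -> forall x y, connect e x y -> mu x <= mu y.
Proof.
move=> mu_lt x y /connectP [p e_p ->] {y}; elim: p x e_p => //= z p IHp x /andP [exz e_p].
exact: leq_trans (ltnW (mu_lt _ _ exz)) (IHp _ e_p).
Qed.

Lemma potential_acyclic e mu :
  (forall x y, e x y -> mu x < mu y) -> ~~ has_directed_cycle e.
Proof.
move=> mu_lt; apply/existsP => [[x /existsP [y /andP [exy cyx]]]].
by have := connect_potential_le mu_lt cyx; rewrite leqNgt mu_lt.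
Qed.

Definition ancestors e (z : U) := #|[set u | connect e u z]|.

Lemma ancestors_gt0 e z : 0 < ancestors e z.
Proof. by apply/card_gt0P; exists z; rewrite inE connect0. Qed.

Lemma acyclic_ancestors_lt e :
  ~~ has_directed_cycle e -> forall x y, e x y -> ancestors e x < ancestors e y.
Proof.
move=> acyc x y exy; apply/proper_card/properP; split.
  by apply/subsetP => u; rewrite !inE => cux; apply: connect_trans cux (connect1 exy).
exists y; rewrite !inE ?connect0 //; apply: contra acyc => cyx.
by apply/existsP; exists x; apply/existsP; exists y; rewrite exy.
Qed.

Lemma sub_acyclic e1 e2 :
  subrel e1 e2 -> ~~ has_directed_cycle e2 -> ~~ has_directed_cycle e1.
Proof.
move=> sub /acyclic_ancestors_lt lt2.
by apply: (@potential_acyclic _ (ancestors e2)) => x y /sub /lt2.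
Qed.

(* A cycle cannot cross from [P] to [~~ P] and come back. *)
Lemma acyclic_split e (P : pred U) :
  (forall x y, e x y -> P y -> P x) ->
  ~~ has_directed_cycle [rel x y | [&& e x y, P x & P y]] ->
  ~~ has_directed_cycle [rel x y | [&& e x y, ~~ P x & ~~ P y]] ->
  ~~ has_directed_cycle e.
Proof.
set eP := [rel x y | _]; set eN := [rel x y | _].
move=> closed /acyclic_ancestors_lt ltP /acyclic_ancestors_lt ltN.
apply: (@potential_acyclic _
  (fun x => if P x then ancestors eP x else #|U| + ancestors eN x)) => x y exy.
have [Py|nPy] := boolP (P y).
  by have Px := closed x y exy Py; rewrite Px ltP //= exy Px.
have [Px|nPx] := boolP (P x); last by rewrite ltn_add2l ltN //= exy nPx.
by rewrite -addn1 leq_add ?max_card ?ancestors_gt0.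
Qed.

Lemma acyclic_ascent_ends e (S : {set U}) :
  ~~ has_directed_cycle e -> S != set0 ->
  ~ (forall a, a \in S -> exists2 b, b \in S & exists z, e a z && connect e z b).
Proof.
move=> acyc /set0Pn [a0 a0S] up.
have [a aS a_max] := @arg_maxnP _ a0 (mem S) (ancestors e) a0S.
have [b bS [z /andP [eaz czb]]] := up a aS.
have := connect_potential_le (acyclic_ancestors_lt acyc) czb.
by have := acyclic_ancestors_lt acyc eaz; have := a_max b bS; lia.
Qed.

Lemma acyclic_descent_ends e (S : {set U}) :
  ~~ has_directed_cycle e -> S != set0 ->
  ~ (forall a, a \in S -> exists2 b, b \in S & exists z, e b z && connect e z a).
Proof.
move=> acyc /set0Pn [a0 a0S] down.
have [a aS a_min] := @arg_minnP _ a0 (mem S) (ancestors e) a0S.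
have [b bS [z /andP [ebz cza]]] := down a aS.
have := connect_potential_le (acyclic_ancestors_lt acyc) cza.
by have := acyclic_ancestors_lt acyc ebz; have := a_min b bS; lia.
Qed.

End Acyclicity.

Section SpanningTree.
Variable U : finType.

Lemma rooted_spanning_tree (r : rel U) (i : U) :
  (forall R : {set U}, i \in R -> R != setT ->
     exists j k, [/\ j \in R, k \notin R & r j k]) ->
  exists (par : U -> U) (h : U -> nat),
    (forall k, h k <= h i) /\ (forall k, k != i -> r (par k) k /\ h k < h (par k)).
Proof.
move=> cut.
(* Grow the tree along crossing edges; [d k] is the step at which [k] joins it. *)
have grow m : m < #|U| -> exists (R : {set U}) (par : U -> U) (d : U -> nat),
    [/\ i \in R, #|R| = m.+1, d i = 0, {in R, forall k, d k <= m}
      & {in R, forall k, k != i -> [/\ par k \in R, r (par k) k & d (par k) < d k]}].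
  elim: m => [|m IHm] ltmU.
    exists [set i], id, (fun => 0); split; rewrite ?set11 ?cards1 // => k.
    by rewrite inE => /eqP ->; rewrite eqxx.
  have [R [par [d [iR cardR di0 d_le tree]]]] := IHm (ltnW ltmU).
  have [|j [k [jR kR rjk]]] := cut R iR.
    by apply/eqP => RT; move: ltmU; rewrite -cardR RT cardsT ltnn.
  exists (k |: R), (fun x => if x == k then j else par x),
         (fun x => if x == k then m.+1 else d x).
  have kR' x : x \in R -> (x == k) = false by move=> xR; apply: contraNF kR => /eqP <-.
  split.
  - by rewrite setU1r.
  - by rewrite cardsU1 kR cardR.
  - by rewrite kR'.
  - move=> x /setU1P [-> | xR]; first by rewrite eqxx.
    by rewrite kR' // (leqW (d_le x xR)).
  move=> x /setU1P [-> _ | xR xi]; first by rewrite eqxx setU1r // rjk kR' // ltnS d_le.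
  by have [parR rx dx] := tree x xR xi; rewrite !kR' // setU1r.
have U_gt0 : 0 < #|U| by apply/card_gt0P; exists i.
have [R [par [d [_ cardR di0 d_le tree]]]] := grow #|U|.-1 ltac:(by rewrite ltn_predL).
have RT k : k \in R.
  suff -> : R = setT by [].
  by apply/eqP; rewrite eqEcard subsetT cardsT cardR (prednK U_gt0) leqnn.
exists par, (fun k => #|U| - d k); split=> [k | k ki]; first by rewrite di0 subn0 leq_subr.
have [_ rk dk] := tree k (RT k) ki; split => //.
by have := d_le _ (RT k); lia.
Qed.

End SpanningTree.

(** * Matchings on a complex *)

Section Matchings.
Variable T : finType.
Implicit Types (K L X : {set {set T}}) (W V : {set {set T} * {set T}}) (p q : {set T} * {set T}).

Lemma hasse_edgeP K x y :
  reflect [/\ x \in K, y \in K, x \proper y & #|y| = #|x|.+1] (hasse_edge K (x, y)).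
Proof. by apply: (iffP and4P) => -[? ? ? /eqP ?]. Qed.

Lemma share_vertexC p q : share_vertex p q = share_vertex q p.
Proof.
rewrite /share_vertex (eq_sym p.1 q.1) (eq_sym p.1 q.2) (eq_sym p.2 q.1) (eq_sym p.2 q.2).
by case: (q.1 == p.2); case: (q.2 == p.1); rewrite ?orbT ?orbF.
Qed.

Lemma share_vertexN (P : pred {set T}) p q :
  P p.1 -> P p.2 -> ~~ P q.1 -> ~~ P q.2 -> ~~ share_vertex p q.
Proof.
by move=> P1 P2 nP1 nP2; apply/or4P => -[] /eqP e; move: nP1 nP2; rewrite -e ?P1 ?P2.
Qed.

Lemma hasse_edge_sub K L p : L \subset K -> hasse_edge L p -> hasse_edge K p.
Proof. by move=> LK /and4P [/(subsetP LK) p1K /(subsetP LK) p2K pp c]; apply/and4P. Qed.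

Lemma matchingP K W :
  reflect ((forall p, p \in W -> hasse_edge K p) /\
           (forall p q, p \in W -> q \in W -> share_vertex p q -> p = q))
          (matching K W).
Proof.
apply: (iffP andP) => [[/forall_inP edge /forall_inP sh] | [edge sh]]; split => //.
- move=> p q pW qW spq; apply/eqP; apply: contraLR spq => pq.
  by have /forall_inP /(_ q qW) /implyP := sh p pW; apply.
- exact/forall_inP.
apply/forall_inP => p pW; apply/forall_inP => q qW; apply/implyP => pq.
by apply: contra pq => /(sh p q pW qW) ->.
Qed.

Section OneMatching.
Variables (K : {set {set T}}) (W : {set {set T} * {set T}}).
Hypothesis matchW : matching K W.

Lemma matching_edge p : p \in W -> hasse_edge K p.
Proof. by case/matchingP: matchW => edge _; apply: edge. Qed.

Lemma matching_fst_inj p q : p \in W -> q \in W -> p.1 = q.1 -> p = q.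
Proof.
by case/matchingP: matchW => _ sh pW qW e; apply: sh; rewrite // /share_vertex e eqxx.
Qed.

Lemma matching_snd_inj p q : p \in W -> q \in W -> p.2 = q.2 -> p = q.
Proof.
by case/matchingP: matchW => _ sh pW qW e; apply: sh; rewrite // /share_vertex e eqxx !orbT.
Qed.

Lemma matching_fst_neq_snd p q : p \in W -> q \in W -> p.1 != q.2.
Proof.
move=> pW qW; apply/eqP => e; case/matchingP: matchW => edge sh.
have pq : p = q by apply: sh; rewrite // /share_vertex e eqxx !orbT.
move: (edge q qW) e; rewrite pq; case: q {pq pW qW} => x y /hasse_edgeP [_ _ xy _] /= xe.
by move: xy; rewrite xe properxx.
Qed.

End OneMatching.

Definition support W : {set {set T}} := [set p.1 | p in W] :|: [set p.2 | p in W].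

Lemma critical_support K W : critical K W = K :\: support W.
Proof.
apply/setP => s; rewrite !inE andbC; congr (_ && _).
apply/forall_inP/norP => [nW | [/imsetP nW1 /imsetP nW2] p pW].
  by split; apply/imsetP => -[p /nW /andP [p1s p2s] e]; rewrite e eqxx in p1s p2s.
by apply/andP; split; apply/eqP => e; [apply: nW1 | apply: nW2]; exists p.
Qed.

Lemma criticalP K W s :
  reflect (s \in K /\ forall p, p \in W -> p.1 != s /\ p.2 != s) (s \in critical K W).
Proof.
rewrite inE; apply: (iffP andP) => [[sK /forall_inP nW] | [sK nW]]; split => //.
  by move=> p /nW /andP.
by apply/forall_inP => p /nW [-> ->].
Qed.

Lemma noncritical_matched K W s : s \in K -> s \notin critical K W ->
  exists2 p, p \in W & p.1 = s \/ p.2 = s.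
Proof.
rewrite critical_support !inE => -> /norP [] /negPn.
by case/orP => /imsetP [p pW ->]; exists p => //; [left | right].
Qed.

Lemma card_critical K W : matching K W -> #|critical K W| + #|W| + #|W| = #|K|.
Proof.
move=> matchW; set A1 := [set p.1 | p in W]; set A2 := [set p.2 | p in W].
have cardA1 : #|A1| = #|W|.
  by apply: card_in_imset => p q pW qW e; exact: (matching_fst_inj matchW pW qW e).
have cardA2 : #|A2| = #|W|.
  by apply: card_in_imset => p q pW qW e; exact: (matching_snd_inj matchW pW qW e).
have disjA : A1 :&: A2 = set0.
  apply/setP => s; rewrite !inE; apply/negbTE/andP => -[/imsetP [p pW ->] /imsetP [q qW]].
  exact/eqP/(matching_fst_neq_snd matchW).
have suppK : support W \subset K.
  by apply/subsetP => s /setUP [] /imsetP [p /(matching_edge matchW) /and4P [? ? _ _] ->].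
have := cardsUI A1 A2; rewrite disjA cards0 addn0 cardA1 cardA2 => cardS.
have := subset_leq_card suppK; rewrite critical_support cardsDS //.
by rewrite /support -/A1 -/A2 cardS; lia.
Qed.

Lemma optimalE K W0 m :
  (forall W, acyclic_matching K W -> m <= #|critical K W|) ->
  acyclic_matching K W0 -> #|critical K W0| = m ->
  forall W, optimal K W = acyclic_matching K W && (#|critical K W| == m).
Proof.
move=> lb acW0 critW0 W; apply/andP/andP => [[acW /forall_inP minW] | [acW /eqP ->]].
  by split => //; rewrite eqn_leq lb // andbT -critW0 minW.
by split => //; apply/forall_inP.
Qed.

Lemma M_top_simplexE K W0 :
  acyclic_matching K W0 -> W0 != set0 -> M_top_simplex K =1 optimal K.
Proof.
have card_crit W' : acyclic_matching K W' -> #|critical K W'| + #|W'| + #|W'| = #|K|.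
  by case/andP => + _; apply: card_critical.
move=> acW0 W0_ne W; have cardW0 := card_crit _ acW0; rewrite -card_gt0 in W0_ne.
rewrite /M_top_simplex /optimal.
apply/and3P/andP => [[acW _ /forall_inP maxW] | [acW /forall_inP minW]].
  split => //; apply/forall_inP => W' acW'; have := card_crit _ acW; have := card_crit _ acW'.
  have [-> | W'_ne] := eqVneq W' set0; first by rewrite cards0; lia.
  by have := maxW W' (introT andP (conj acW' W'_ne)); lia.
have := minW W0 acW0; have := card_crit _ acW.
split => //; first by rewrite -card_gt0; lia.
apply/forall_inP => W' /andP [acW' _]; have := minW W' acW'; have := card_crit _ acW'; lia.
Qed.

Lemma modified_rel_down_up K W x a b :
  matching K W -> (x, a) \in W -> hasse_edge K (x, b) -> b != a ->
  modified_rel K W a x && modified_rel K W x b.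
Proof.
move=> matchW xaW xb ba; rewrite /modified_rel xaW orbT xb /=.
apply/orP; left; apply: contra ba => xbW.
by have [] := matching_fst_inj matchW xbW xaW erefl => ->.
Qed.

Lemma modified_rel_up_down K W a t b :
  matching K W -> (a, t) \in W -> hasse_edge K (b, t) -> b != a ->
  modified_rel K W b t && modified_rel K W t a.
Proof.
move=> matchW atW bt ba; rewrite /modified_rel atW orbT bt andbT /=.
apply/orP; left; apply: contra ba => btW.
by have [] := matching_snd_inj matchW btW atW erefl => ->.
Qed.

Lemma modified_rel_restrict K L V x y : L \subset K -> x \in L -> y \in L ->
  modified_rel L (restrict L V) x y = modified_rel K V x y.
Proof.
move=> LK xL yL; rewrite /modified_rel !inE /= xL yL !andbT.
by rewrite /hasse_edge /= xL yL (subsetP LK x xL) (subsetP LK y yL).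
Qed.

Lemma acyclic_matching_restrict K L V : L \subset K ->
  acyclic_matching K V -> acyclic_matching L (restrict L V).
Proof.
move=> LK /andP [matchV acycV].
have restrL p : p \in restrict L V -> [&& p \in V, p.1 \in L & p.2 \in L] by rewrite inE.
apply/andP; split.
  apply/matchingP; split => [[x y] /restrL /and3P [/(matching_edge matchV) xy xL yL] |].
    by case/and4P: xy => _ _ xy cy; rewrite /hasse_edge /= xL yL xy cy.
  move=> p q /restrL /andP [pV _] /restrL /andP [qV _].
  by case/matchingP: matchV => _; apply.
apply: sub_acyclic acycV => x y exy.
have [xL yL] : x \in L /\ y \in L.
  by case/orP: exy => [/andP [/and4P [] //] | /restrL /and3P [_ yL xL]].
by rewrite -(modified_rel_restrict V LK xL yL).
Qed.

(* A vertex [a] matched with an edge [t] is reached from the other vertex of [t], so if all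
   vertices were matched they would form an endless descent. *)
Lemma acyclic_critical_vertex X W m (x0 : T) :
  (forall s, (s \in X) = (0 < #|s| <= m)) -> 1 < m ->
  acyclic_matching X W -> exists2 v : {set T}, #|v| = 1 & v \in critical X W.
Proof.
move=> memX m_gt1 /andP [matchW acycW].
case: (boolP [exists v : {set T}, (#|v| == 1) && (v \in critical X W)]).
  by case/existsP => v /andP [/eqP v1 vc]; exists v.
move/existsPn => noncrit; exfalso.
apply: (acyclic_descent_ends acycW (S := [set v : {set T} | #|v| == 1])).
  by apply/set0Pn; exists [set x0]; rewrite inE cards1.
move=> a; rewrite inE => /eqP a1.
have aX : a \in X by rewrite memX a1 /= ltnW.
have /(noncritical_matched aX) [[a' t] atW /= [aa' | ta]] : a \notin critical X W.
- by have := noncrit a; rewrite a1 eqxx.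
- subst a'.
  have /hasse_edgeP [_ tX at_ t2] := matching_edge matchW atW; rewrite a1 in t2.
  have b1 : #|t :\: a| = 1 by rewrite cardsD (setIidPr (proper_sub at_)) t2 a1.
  exists (t :\: a); first by rewrite inE b1.
  exists t; have /andP [bt tb] : modified_rel X W (t :\: a) t && modified_rel X W t a.
    apply: modified_rel_up_down atW _ _ => //.
      apply/hasse_edgeP; split => //; first by rewrite memX b1 /= ltnW.
        by rewrite properEcard subsetDl b1 t2.
      by rewrite b1 t2.
    have /set0Pn [z za] : a != set0 by rewrite -card_gt0 a1.
    by apply/eqP => ba; have := za; rewrite -{1}ba inE za.
  by rewrite bt (connect1 tb).
have /hasse_edgeP [a'X _ _] := matching_edge matchW atW; rewrite /= ta a1 => -[a'0].
by move: a'X; rewrite memX -a'0.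
Qed.

End Matchings.

Lemma radix_ltn m a b r s : a < b -> r < m -> m * a + r < m * b + s.
Proof. by move=> ab rm; nia. Qed.

(** * The simplex and its (n-2)-skeleton *)

Section Simplex.
Variable n : nat.
Hypothesis n_ge3 : 3 <= n.
Local Notation T := 'I_n.+1.
Local Notation K := (Delta n).
Local Notation L := (skeleton (Delta n) (n - 2)).
Local Notation top := [set: T].
Implicit Types (s : {set T}) (V W : {set {set T} * {set T}}).

Let n_gt0 : 0 < n := leq_trans (isT : 0 < 3) n_ge3.

Definition facet (j : T) : {set T} := ~: [set j].
Definition ridge (j k : T) : {set T} := ~: [set j; k].

Lemma card_top : #|top| = n.+1.
Proof. by rewrite cardsT card_ord. Qed.

Lemma card_set_le s : #|s| <= n.+1.
Proof. by have := max_card s; rewrite card_ord. Qed.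

Lemma eq_card_top s : #|s| = n.+1 -> s = top.
Proof. by move=> cs; apply/eqP; rewrite eqEcard subsetT card_top cs leqnn. Qed.

Lemma mem_Delta s : (s \in K) = (0 < #|s|).
Proof. by rewrite inE card_gt0. Qed.

Lemma mem_Delta_bounded s : (s \in K) = (0 < #|s| <= n.+1).
Proof. by rewrite mem_Delta card_set_le andbT. Qed.

Lemma mem_skeleton s : (s \in L) = (0 < #|s| <= n - 1).
Proof. by rewrite inE mem_Delta; congr (_ && (_ <= _)); lia. Qed.

Lemma skeleton_sub : L \subset K.
Proof. by apply/subsetP => s; rewrite inE => /andP []. Qed.

Lemma card_facet j : #|facet j| = n.
Proof. by rewrite cardsCs setCK cards1 card_ord subn1. Qed.

Lemma facet_inj : injective facet.
Proof. by move=> j k /setC_inj /set1_inj. Qed.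

Lemma card_ridge j k : j != k -> #|ridge j k| = n - 1.
Proof. by move=> jk; rewrite cardsCs setCK cards2 jk card_ord; lia. Qed.

Lemma ridge_skeleton j k : j != k -> ridge j k \in L.
Proof. by move=> jk; rewrite mem_skeleton card_ridge //; lia. Qed.

Lemma facet_not_skeleton j : facet j \notin L.
Proof. by rewrite mem_skeleton card_facet; lia. Qed.

Lemma top_not_skeleton : top \notin L.
Proof. by rewrite mem_skeleton card_top; lia. Qed.

Lemma eq_card_facet s : #|s| = n -> exists j, s = facet j.
Proof.
move=> cs; have /cards1P [j sCj] : #|~: s| == 1 by rewrite cardsCs setCK card_ord cs subSnn.
by exists j; rewrite /facet -sCj setCK.
Qed.

Lemma facet_Delta j : facet j \in K.
Proof. by rewrite mem_Delta card_facet; lia. Qed.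

Lemma card_facet_neq1 j : #|facet j| != 1.
Proof. by rewrite card_facet; lia. Qed.

Lemma subfacet_skeleton s : #|s|.+1 = n -> (s \in L) && (#|s| != 1).
Proof. by move=> cs; rewrite mem_skeleton -andbA; apply/and3P; split; [| | apply/eqP]; lia. Qed.

Lemma skeleton_card_lt s : s \in L -> #|s| < n.
Proof. by rewrite mem_skeleton => /andP [_]; lia. Qed.

Lemma Delta_cases s : s \in K -> [\/ s \in L, s = top | exists j, s = facet j].
Proof.
rewrite mem_Delta mem_skeleton => -> /=.
have : #|s| <= n - 1 \/ #|s| = n \/ #|s| = n.+1 by have := card_set_le s; lia.
case=> [| [/eq_card_facet | /eq_card_top]]; by [constructor 1 | constructor 3 | constructor 2].
Qed.

Lemma card_Delta : #|K| = #|L| + n.+2.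
Proof.
have KL : K :\: L = top |: [set facet j | j in T].
  apply/setP => s; rewrite in_setD in_setU1; apply/andP/idP => [[nL /Delta_cases] | ].
    case=> [sL | -> | [j ->]]; [by rewrite sL in nL | by rewrite eqxx | ].
    by apply/orP; right; apply/imsetP; exists j.
  case/predU1P => [-> | /imsetP [j _ ->]].
    by rewrite top_not_skeleton mem_Delta card_top.
  by rewrite facet_not_skeleton mem_Delta card_facet; lia.
have := cardsD K L; rewrite (setIidPr skeleton_sub) KL cardsU1 card_in_imset; last first.
  by move=> j k _ _; apply: facet_inj.
have -> : top \notin [set facet j | j in T].
  by apply/imsetP => -[j _ /(congr1 (fun s => #|s|))]; rewrite card_top card_facet; lia.
have := subset_leq_card skeleton_sub; rewrite card_ord; lia.
Qed.

Definition apex : T := ord0.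

Definition cone : {set {set T} * {set T}} :=
  [set (s, apex |: s) | s in [set s | (s != set0) && (apex \notin s)]].

Lemma coneP p :
  reflect (exists2 s, (s != set0) && (apex \notin s) & p = (s, apex |: s)) (p \in cone).
Proof. by apply: (iffP imsetP) => -[s]; rewrite ?inE => sP ->; exists s; rewrite ?inE. Qed.

Lemma card_apexU s : apex \notin s -> #|apex |: s| = #|s|.+1.
Proof. by move=> ns; rewrite cardsU1 ns. Qed.

Lemma cone_matching : matching K cone.
Proof.
apply/matchingP; split => [p /coneP [s /andP [s0 ns] ->] | p q].
  apply/hasse_edgeP; rewrite !mem_Delta card_apexU // card_gt0 s0.
  by split => //; rewrite properEcard subsetU1 card_apexU // ltnSn.
move=> /coneP [s /andP [_ ns] ->] /coneP [t /andP [_ nt] ->].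
rewrite /share_vertex /= => /or4P [] /eqP st.
- by rewrite st.
- by move: ns; rewrite st setU11.
- by move: nt; rewrite -st setU11.
- by rewrite -(setU1K ns) st setU1K.
Qed.

Lemma cone_acyclic : acyclic_matching K cone.
Proof.
rewrite /acyclic_matching cone_matching /=.
(* Unmatched Hasse edges add a vertex other than the apex; reversed pairs remove the apex. *)
apply: (@potential_acyclic _ _ (fun z : {set T} => 2 * #|z :\ apex| + (apex \notin z))) => x y.
case/orP => [/andP [/hasse_edgeP [xK _ xy cy] xy_cone] | /coneP [s /andP [_ ns] [-> ->]]].
  have [ax | ax] := boolP (apex \in x).
    have ay := subsetP (proper_sub xy) _ ax.
    have := cardsD1 apex x; have := cardsD1 apex y; rewrite ax ay cy /=.
    by move: #|x :\ apex| #|y :\ apex| #|x| => a b c; lia.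
  have ay : apex \notin y.
    apply: contra xy_cone => ay; apply/coneP; exists x; first by rewrite -card_gt0 -mem_Delta xK.
    congr (_, _); apply/esym/eqP; rewrite eqEcard card_apexU // cy leqnn andbT.
    by rewrite subUset sub1set ay (proper_sub xy).
  have := cardsD1 apex x; have := cardsD1 apex y; rewrite (negbTE ax) (negbTE ay) cy /=.
  by move: #|x :\ apex| #|y :\ apex| #|x| => a b c; lia.
rewrite setU1K // setU11 /=; have := cardsD1 apex s; rewrite (negbTE ns) /=.
by move: #|s :\ apex| #|s| => a b; lia.
Qed.

Lemma critical_cone : critical K cone = [set [set apex]].
Proof.
apply/setP => s; rewrite in_set1; apply/criticalP/eqP => [[sK free] | ->].
  have [sa | ns] := boolP (apex \in s); last first.
    have /free [] : (s, apex |: s) \in cone.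
      by apply/coneP; exists s; rewrite -?card_gt0 -?mem_Delta ?sK.
    by rewrite eqxx.
  have [s1 | s1] := eqVneq (s :\ apex) set0.
    apply/eqP; rewrite eqEsubset sub1set sa andbT; apply/subsetP => z zs.
    by rewrite inE; apply: contraT => za; rewrite -(in_set0 z) -s1 !inE za zs.
  have /free [_] : (s :\ apex, s) \in cone.
    by apply/coneP; exists (s :\ apex); rewrite ?setD1K // s1 !inE eqxx.
  by rewrite eqxx.
split; first by rewrite mem_Delta cards1.
move=> _ /coneP [t /andP [t0 nt] ->] /=; split; apply/eqP => ta.
  by move: nt; rewrite ta set11.
case/set0Pn: t0 => z zt; have : z \in apex |: t by rewrite setU1r.
by rewrite ta in_set1 => /eqP za; move: nt; rewrite -za zt.
Qed.

Lemma optimal_DeltaE V : optimal K V = acyclic_matching K V && (#|critical K V| == 1).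
Proof.
apply: (optimalE _ cone_acyclic); last by rewrite critical_cone cards1.
move=> W /(acyclic_critical_vertex apex mem_Delta_bounded (leqW (ltnW n_ge3))) [v _ vc].
by apply/card_gt0P; exists v.
Qed.

Lemma optimal_cone : optimal K cone.
Proof. by rewrite optimal_DeltaE cone_acyclic critical_cone cards1. Qed.

Lemma optimal_Delta_matched V s : optimal K V -> s \in K -> #|s| != 1 ->
  exists2 p, p \in V & p.1 = s \/ p.2 = s.
Proof.
rewrite optimal_DeltaE => /andP [acV /cards1P [c critV]] sK s1.
apply: noncritical_matched sK _; rewrite critV inE; apply: contra s1 => /eqP ->.
have [v v1 vc] := acyclic_critical_vertex apex mem_Delta_bounded (leqW (ltnW n_ge3)) acV.
by move: vc; rewrite critV inE => /eqP <-; rewrite v1.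
Qed.

(** * Critical ridges on the skeleton *)

Lemma mem_ridge j k z : (z \in ridge j k) = (z != j) && (z != k).
Proof. by rewrite !inE negb_or. Qed.

(* Otherwise each crossing ridge, matched down to a cell of size n - 2, leads to another
   crossing ridge. *)
Lemma critical_ridge_cut W (R : {set T}) j0 k0 :
  acyclic_matching L W -> j0 \in R -> k0 \notin R ->
  exists j k, [/\ j \in R, k \notin R & ridge j k \in critical L W].
Proof.
move=> /andP [matchW acycW] j0R k0R.
case: (boolP [exists j, exists k, [&& j \in R, k \notin R & ridge j k \in critical L W]]).
  by case/existsP => j /existsP [k /and3P [jR kR jk_crit]]; exists j, k.
move=> /existsPn cut_free; exfalso.
have neq j k : j \in R -> k \notin R -> j != k by move=> jR; apply: contraNneq => <-.
apply: (acyclic_ascent_ends acycW (S := [set ridge j k | j in R, k in ~: R])).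
  by apply/set0Pn; exists (ridge j0 k0); apply/imset2P; exists j0 k0; rewrite ?inE.
move=> ? /imset2P [j k jR]; rewrite inE => kR ->.
have jk := neq j k jR kR; have jkL := ridge_skeleton jk.
have /(noncritical_matched jkL) [[x a] xaW /= [xr | ar]] : ridge j k \notin critical L W.
- by have /existsPn /(_ k) := cut_free j; rewrite jR kR.
- have /hasse_edgeP [_ aL _ ca] := matching_edge matchW xaW.
  by move: aL => /skeleton_card_lt; rewrite ca xr card_ridge // subn1 (prednK n_gt0) ltnn.
subst a; have /hasse_edgeP [xL _ xa cx] := matching_edge matchW xaW; rewrite card_ridge // in cx.
have [_ [l la lx]] := properP xa.
have x_sub u v : u \notin x -> v \notin x -> x \subset ridge u v.
  move=> ux vx; apply/subsetP => z zx; rewrite mem_ridge.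
  by apply/andP; split; [apply: contraNneq _ ux | apply: contraNneq _ vx] => <-.
have jx : j \notin x by apply/negP => /(subsetP (proper_sub xa)); rewrite mem_ridge eqxx.
have kx : k \notin x by apply/negP => /(subsetP (proper_sub xa)); rewrite mem_ridge eqxx andbF.
have [u [v [uR vR xuv luv]]] :
    exists u v, [/\ u \in R, v \notin R, x \subset ridge u v & l \notin ridge u v].
  by case: (boolP (l \in R)) => lR; [exists l, k | exists j, l];
    rewrite mem_ridge eqxx ?andbF ?x_sub.
exists (ridge u v); first by apply/imset2P; exists u v; rewrite ?inE.
have uv := neq u v uR vR.
have /andP [rx xuv'] : modified_rel L W (ridge j k) x && modified_rel L W x (ridge u v).
  apply: modified_rel_down_up matchW xaW _ _; last by apply: contraNneq luv => ->.
  apply/hasse_edgeP; split => //; first exact: ridge_skeleton.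
    by rewrite properEcard xuv card_ridge // cx ltnSn.
  by rewrite card_ridge // cx.
by exists x; rewrite rx (connect1 xuv').
Qed.

(* A spanning tree, rooted at [i], of the graph whose edges {j, k} are the critical ridges
   [ridge j k] of [W]: [par] is the parent map and [h] increases towards the root. *)
Definition critical_ridge_tree W i (par : T -> T) (h : T -> nat) :=
  (forall k, h k <= h i) /\
  (forall k, k != i -> ridge (par k) k \in critical L W /\ h k < h (par k)).

Definition tree_ridges i (par : T -> T) := [set ridge (par k) k | k in [set~ i]].

Lemma critical_ridge_tree_exists W i : acyclic_matching L W ->
  exists par h, critical_ridge_tree W i par h.
Proof.
move=> acW; apply: (rooted_spanning_tree (r := fun j k => ridge j k \in critical L W)).
move=> R iR RT; have /subsetPn [k0 _ k0R] : ~~ (setT \subset R) by rewrite subTset.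
by have [j [k [jR kR crit]]] := critical_ridge_cut acW iR k0R; exists j, k.
Qed.

Section RidgeTree.
Variables (W : {set {set T} * {set T}}) (i : T) (par : T -> T) (h : T -> nat).
Hypothesis tree : critical_ridge_tree W i par h.

Lemma tree_ridge_inj : {in [set~ i] &, injective (fun k => ridge (par k) k)}.
Proof.
have [_ up] := tree; move=> k l; rewrite !in_setC1 => ki li /setC_inj e.
have /set2P [kl | //] : k \in [set par l; l] by rewrite -e set22.
have /set2P [lk | //] : l \in [set par k; k] by rewrite e set22.
by have := (up k ki).2; have := (up l li).2; rewrite -kl -lk; lia.
Qed.

Lemma card_tree_ridges : #|tree_ridges i par| = n.
Proof. by rewrite card_in_imset ?cardsC1 ?card_ord //; apply: tree_ridge_inj. Qed.

Lemma tree_ridges_critical : tree_ridges i par \subset critical L W.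
Proof. by have [_ up] := tree; apply/subsetP => _ /imsetP [k /[!in_setC1] /up [? _] ->]. Qed.

Lemma card_tree_ridge c : c \in tree_ridges i par -> #|c| = n - 1.
Proof.
have [_ up] := tree; case/imsetP => k /[!in_setC1] /up [_ hk] ->; apply: card_ridge.
by apply: contraTneq hk => ->; rewrite ltnn.
Qed.

End RidgeTree.

Lemma skeleton_critical_ge W : acyclic_matching L W -> n.+1 <= #|critical L W|.
Proof.
move=> acW; have [par [h tree]] := critical_ridge_tree_exists apex acW.
have [v v1 vc] := acyclic_critical_vertex apex mem_skeleton (ltac:(lia) : 1 < n - 1) acW.
have vT : v \notin tree_ridges apex par.
  by apply/negP => /(card_tree_ridge tree); rewrite v1; lia.
have sub : v |: tree_ridges apex par \subset critical L W.
  by rewrite subUset sub1set vc (tree_ridges_critical tree).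
by have := subset_leq_card sub; rewrite cardsU1 vT (card_tree_ridges tree).
Qed.

(** * Restricting optimal matchings to the skeleton *)

Lemma optimal_root V : optimal K V -> exists i, (facet i, top) \in V.
Proof.
move=> optV; have /andP [/andP [matchV _] _] := optV.
have topK : top \in K by rewrite mem_Delta card_top.
have top1 : #|top| != 1 by rewrite card_top; lia.
have [[x y] xyV /= [xt | yt]] := optimal_Delta_matched optV topK top1.
- have /hasse_edgeP [_ _ _ cy] := matching_edge matchV xyV.
  by have := card_set_le y; rewrite cy xt card_top ltnn.
have /hasse_edgeP [_ _ _] := matching_edge matchV xyV; rewrite yt card_top => -[/esym].
by case/eq_card_facet => i xi; exists i; rewrite -xi -yt.
Qed.

Lemma hasse_edge_skeleton x y : hasse_edge K (x, y) -> y \in L -> x \in L.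
Proof.
case/hasse_edgeP => + _ _ cy; rewrite mem_Delta !mem_skeleton cy => -> /andP [_]; lia.
Qed.

(* The pairs of [V] leaving [L] have distinct upper cells, outside [L] and other than
   [facet i]. *)
Lemma card_restrict_ge V i : optimal K V -> (facet i, top) \in V ->
  #|V| <= #|restrict L V| + n.+1.
Proof.
move=> /andP [/andP [matchV _] _] rootV.
have sub : restrict L V \subset V by apply/subsetP => p; rewrite inE => /andP [].
rewrite -(cardsID (restrict L V) V) (setIidPr sub) leq_add2l.
have cardKL : #|K :\: (facet i |: L)| = n.+1.
  rewrite cardsDS; first by rewrite cardsU1 facet_not_skeleton card_Delta; lia.
  by rewrite subUset sub1set skeleton_sub mem_Delta card_facet andbT; lia.
apply: leq_trans (eq_leq cardKL).
rewrite -(@card_in_imset _ _ snd); last first.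
  by move=> p q /setDP [pV _] /setDP [qV _] e; exact: (matching_snd_inj matchV pV qV e).
apply/subset_leq_card/subsetP => _ /imsetP [[x y] /setDP [xyV nr] ->] /=.
have xy := matching_edge matchV xyV; have /hasse_edgeP [_ yK _ _] := xy.
rewrite in_setD in_setU1 yK andbT negb_or eq_sym (matching_fst_neq_snd matchV rootV xyV) /=.
by apply: contra nr => yL; rewrite inE xyV yL (hasse_edge_skeleton xy yL).
Qed.

Lemma critical_restrict V : optimal K V -> #|critical L (restrict L V)| = n.+1.
Proof.
move=> optV; have [i rootV] := optimal_root optV.
move: (optV); rewrite optimal_DeltaE => /andP [acV /eqP critV].
have acW := acyclic_matching_restrict skeleton_sub acV.
have := skeleton_critical_ge acW; have := card_restrict_ge optV rootV.
have := card_critical (proj1 (andP acW)); have := card_critical (proj1 (andP acV)).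
rewrite critV card_Delta.
by move: #|critical _ _| #|restrict L V| #|V| #|L| => c r v l; lia.
Qed.

Lemma optimal_skeletonE W :
  optimal L W = acyclic_matching L W && (#|critical L W| == n.+1).
Proof.
apply: (optimalE skeleton_critical_ge).
  by apply: acyclic_matching_restrict skeleton_sub cone_acyclic.
exact: critical_restrict optimal_cone.
Qed.

Lemma optimal_restrict V : optimal K V -> optimal L (restrict L V).
Proof.
move=> optV; rewrite optimal_skeletonE critical_restrict // eqxx andbT.
by apply: acyclic_matching_restrict skeleton_sub (proj1 (andP optV)).
Qed.

(** * Extending optimal matchings of the skeleton *)

Lemma ridge_sub_facet j k : ridge j k \subset facet k.
Proof. by apply/subsetP => z; rewrite mem_ridge !inE => /andP []. Qed.

Section Extension.
Variables (W : {set {set T} * {set T}}) (i : T) (par : T -> T) (h : T -> nat).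
Hypotheses (optW : optimal L W) (tree : critical_ridge_tree W i par h).

Definition extra_pairs := (facet i, top) |: [set (ridge (par k) k, facet k) | k in [set~ i]].
Definition extension := W :|: extra_pairs.

Let matchW : matching L W.
Proof. by case/andP: optW => /andP []. Qed.

Let par_neq k : k != i -> par k != k.
Proof. by have [_ up] := tree; move=> /up [_]; apply: contraTneq => ->; rewrite ltnn. Qed.

Let lt_root k : k != i -> h k < h i.
Proof. by have [top_h up] := tree; move=> /up [_ /leq_trans]; apply. Qed.

Let card_ridge_par k : k != i -> #|ridge (par k) k| = n - 1.
Proof. by move/par_neq; apply: card_ridge. Qed.

Lemma extra_pairsP p : reflect
  (p = (facet i, top) \/ exists2 k, k != i & p = (ridge (par k) k, facet k))
  (p \in extra_pairs).
Proof.
apply: (iffP setU1P) => -[-> | pT]; [by left | | by left | ].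
  by right; case/imsetP: pT => k /[!in_setC1] ki ->; exists k.
by right; case: pT => k ki ->; apply/imsetP; exists k; rewrite ?in_setC1.
Qed.

(* [low] cells form the subcomplex on which [extension] agrees with [W]. *)
Let low z := (z \in L) && (z \notin tree_ridges i par).

Let low_pair p : p \in W -> low p.1 && low p.2.
Proof.
move=> pW; have /and4P [p1L p2L _ _] := matching_edge matchW pW.
have unmatched z : (p.1 == z) || (p.2 == z) -> z \notin tree_ridges i par.
  apply: contraL => /(subsetP (tree_ridges_critical tree)) /criticalP [_ /(_ p pW)].
  by case=> /negbTE -> /negbTE ->.
by rewrite /low p1L p2L !unmatched ?eqxx ?orbT.
Qed.

Lemma extra_pair_snd p : p \in extra_pairs -> p.2 \notin L.
Proof. by case/extra_pairsP => [-> | [k _ ->]]; rewrite ?top_not_skeleton ?facet_not_skeleton. Qed.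

Let extra_pair_high p : p \in extra_pairs -> ~~ low p.1 && ~~ low p.2.
Proof.
move=> pT; rewrite /low (negbTE (extra_pair_snd pT)) andbT.
case/extra_pairsP: pT => [-> | [k ki ->]] /=; first by rewrite (negbTE (facet_not_skeleton _)).
by rewrite negb_and negbK; apply/orP; right; apply/imsetP; exists k; rewrite ?in_setC1.
Qed.

Lemma extension_matching : matching K extension.
Proof.
apply/matchingP; split => [p /setUP [pW | /extra_pairsP [-> | [k ki ->]]] | p q].
- exact: hasse_edge_sub skeleton_sub (matching_edge matchW pW).
- apply/hasse_edgeP; rewrite !mem_Delta properEcard subsetT card_facet card_top.
  by split; lia.
- apply/hasse_edgeP; rewrite !mem_Delta properEcard ridge_sub_facet card_facet card_ridge_par //.
  by split; lia.
have cross p' q' : p' \in W -> q' \in extra_pairs -> ~~ share_vertex p' q'.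
  move=> /low_pair /andP [l1 l2] /extra_pair_high /andP [h1 h2].
  exact: share_vertexN h1 h2.
case/setUP => [pW | pT] /setUP [qW | qT].
- by case/matchingP: matchW => _; apply.
- by move/negP: (cross _ _ pW qT).
- by rewrite share_vertexC; move/negP: (cross _ _ qW pT).
case/extra_pairsP: pT => [-> | [k ki ->]]; case/extra_pairsP: qT => [-> | [l li ->]] //;
  rewrite /share_vertex /= => /or4P [] /eqP e;
  try by have := congr1 (fun s => #|s|) e; rewrite ?card_facet ?card_top ?card_ridge_par //; lia.
- by move/facet_inj: e li => <-; rewrite eqxx.
- by move/facet_inj: e ki => ->; rewrite eqxx.
- by rewrite (tree_ridge_inj tree _ _ e) // in_setC1.
by move/facet_inj: e => ->.
Qed.

Lemma extension_root : (facet i, top) \in extension.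
Proof. by rewrite in_setU setU11 orbT. Qed.

Lemma restrict_extension : restrict L extension = W.
Proof.
apply/setP => p; rewrite inE; apply/idP/idP => [/andP [/setUP [// | /extra_pair_snd]] | pW].
  by move=> /negbTE ->; rewrite andbF.
by have /and4P [-> -> _ _] := matching_edge matchW pW; rewrite in_setU pW.
Qed.

Lemma card_extension : #|extension| = #|W| + n.+1.
Proof.
have cardT : #|[set (ridge (par k) k, facet k) | k in [set~ i]]| = n.
  by rewrite card_in_imset ?cardsC1 ?card_ord // => k l _ _ [_] /facet_inj.
have rootT : (facet i, top) \notin [set (ridge (par k) k, facet k) | k in [set~ i]].
  by apply/imsetP => -[k _ [_ /(congr1 (fun s => #|s|))]]; rewrite card_top card_facet; lia.
have disj : W :&: extra_pairs = set0.
  apply/setP => p; rewrite in_setI in_set0; apply/negbTE/negP.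
  by case/andP => /low_pair /andP [lp1 _] /extra_pair_high /andP []; rewrite lp1.
by rewrite cardsU disj cards0 subn0 cardsU1 rootT cardT.
Qed.

Lemma critical_extension : #|critical K extension| = 1.
Proof.
have := card_critical extension_matching; have := card_critical matchW.
move: optW; rewrite optimal_skeletonE => /andP [_ /eqP ->].
rewrite card_extension card_Delta.
by move: #|critical _ _| #|W| #|L| => c w l; lia.
Qed.

(* A potential on the cells outside [low]: going up from the ridge of [k] to the facet of
   [par k] raises the height [h], and [top] sits just below the facet of the root. *)
Let height (z : {set T}) :=
  if z == top then 3 * h i
  else if [pick k | z == facet k] is Some k then 3 * h k + 1
  else if [pick k | (k != i) && (z == ridge (par k) k)] is Some k then 3 * h k + 2
  else 0.

Let height_top : height top = 3 * h i.
Proof. by rewrite /height eqxx. Qed.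

Let facet_neq_top k : facet k != top.
Proof. by apply/eqP => /(congr1 (fun s => #|s|)); rewrite card_facet card_top; lia. Qed.

Let height_facet k : height (facet k) = 3 * h k + 1.
Proof.
rewrite /height (negbTE (facet_neq_top k)).
by case: pickP => [k' /eqP /facet_inj -> // | /(_ k)]; rewrite eqxx.
Qed.

Let height_ridge k : k != i -> height (ridge (par k) k) = 3 * h k + 2.
Proof.
move=> ki; rewrite /height ifF; last first.
  by apply/eqP => /(congr1 (fun s => #|s|)); rewrite card_top card_ridge_par //; lia.
case: pickP => [k' /eqP /(congr1 (fun s => #|s|)) | _].
  by rewrite card_facet card_ridge_par //; lia.
case: pickP => [k' /andP [k'i /eqP e] | /(_ k)]; last by rewrite ki eqxx.
by rewrite (tree_ridge_inj tree _ _ e) ?in_setC1.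
Qed.

Let low_closed x y : modified_rel K extension x y -> low y -> low x.
Proof.
case/orP => [/andP [xy _] /andP [yL yT] | /setUP [/low_pair /andP [_ lx] _ // | ]]; last first.
  by case/extra_pair_high/andP => /negbTE ->.
have /hasse_edgeP [_ _ _ cy] := xy; rewrite /low (hasse_edge_skeleton xy yL) /=.
apply: contra yT => /(card_tree_ridge tree) cx; move: yL; rewrite mem_skeleton cy cx.
by move=> /andP [_]; lia.
Qed.

Let height_increasing x y :
  modified_rel K extension x y -> ~~ low x -> ~~ low y -> height x < height y.
Proof.
case/orP => [/andP [/hasse_edgeP [xK _ xy cy] xyE] | /setUP [/low_pair /andP [ly _] | ]] nx ny;
  last 2 first.
- by rewrite ly in ny.
- by case/extra_pairsP: nx ny => [[-> ->] | [k ki [-> ->]]];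
    rewrite ?height_top ?height_facet ?height_ridge // ?ltn_add2l ?addn1 ?ltnSn.
case/Delta_cases: xK => [xL | xt | [j xj]].
- have /imsetP [k /[!in_setC1] ki xk] : x \in tree_ridges i par by move: nx; rewrite /low xL negbK.
  have [j yj] : exists j, y = facet j.
    by apply: eq_card_facet; rewrite cy xk card_ridge_par // subn1 (prednK n_gt0).
  have : j \notin x by apply/negP => /(subsetP (proper_sub xy)); rewrite yj !inE eqxx.
  rewrite xk yj mem_ridge negb_and !negbK => /orP [/eqP -> | /eqP jk].
    by rewrite height_ridge // height_facet radix_ltn //; have [_ /(_ k ki) []] := tree.
  by move: xyE; rewrite xk yj jk in_setU; case/norP => _ /extra_pairsP []; right; exists k.
- by have := card_set_le y; rewrite cy xt card_top ltnn.
have yt : y = top by apply: eq_card_top; rewrite cy xj card_facet.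
have ji : j != i by apply: contraNneq xyE => ji; rewrite xj yt ji extension_root.
by rewrite xj yt height_facet height_top -[3 * h i]addn0 radix_ltn ?lt_root.
Qed.

Lemma extension_acyclic : ~~ has_directed_cycle (modified_rel K extension).
Proof.
have [/andP [_ acW] _] := andP optW.
apply: (acyclic_split low_closed).
  apply: sub_acyclic acW => x y /and3P [exy /andP [xL _] /andP [yL _]].
  by rewrite -restrict_extension (modified_rel_restrict _ skeleton_sub xL yL).
by apply: (potential_acyclic (mu := height)) => x y /and3P [/height_increasing].
Qed.

Lemma extension_optimal : optimal K extension.
Proof.
rewrite optimal_DeltaE /acyclic_matching extension_matching extension_acyclic.
by rewrite critical_extension.
Qed.

End Extension.

(** * Uniqueness of the extension *)

Section Uniqueness.
Variables (V V' : {set {set T} * {set T}}) (i : T).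
Hypotheses (optV : optimal K V) (optV' : optimal K V').
Hypothesis same_restrict : restrict L V = restrict L V'.
Hypotheses (rootV : (facet i, top) \in V) (rootV' : (facet i, top) \in V').

Let matchV : matching K V. Proof. by case/andP: optV => /andP []. Qed.

Let matchV' : matching K V'. Proof. by case/andP: optV' => /andP []. Qed.

Let restrict_V' p : p \in V' -> p.1 \in L -> p.2 \in L -> p \in V.
Proof.
move=> pV' p1L p2L; have : p \in restrict L V' by rewrite inE pV' p1L p2L.
by rewrite -same_restrict inE => /andP [].
Qed.

Lemma rematch_ridge c j : (c, facet j) \in V -> (c, facet j) \notin V' ->
  exists2 k, k != j & (c, facet k) \in V'.
Proof.
move=> cjV cjV'; have /hasse_edgeP [cK _ _] := matching_edge matchV cjV.
rewrite card_facet => /esym cn; have /andP [cL c1] := subfacet_skeleton cn.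
have [[x y] xyV' /= [xc | yc]] := optimal_Delta_matched optV' cK c1; last first.
  move: yc xyV' => -> xcV'; have xL := hasse_edge_skeleton (matching_edge matchV' xcV') cL.
  by have := matching_fst_neq_snd matchV cjV (restrict_V' xcV' xL cL); rewrite eqxx.
move: xc xyV' => -> cyV'; have /hasse_edgeP [_ _ _] := matching_edge matchV' cyV'.
rewrite cn => /eq_card_facet [k yk]; exists k; last by rewrite -yk.
by apply: contraNneq cjV' => <-; rewrite -yk.
Qed.

Lemma rematch_facet c j k : (c, facet j) \in V -> (c, facet k) \in V' -> k != j ->
  exists c', (c', facet k) \in V /\ (c', facet k) \notin V'.
Proof.
move=> cjV ckV' kj.
have [[x y] xyV /= [xk | yk]] := optimal_Delta_matched optV (facet_Delta k) (card_facet_neq1 k).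
- move: xk xyV => -> kyV; have /hasse_edgeP [_ _ _ cy] := matching_edge matchV kyV.
  have yt : y = top by apply: eq_card_top; rewrite cy card_facet.
  have [/facet_inj ki] := matching_snd_inj matchV kyV rootV yt.
  by have := matching_fst_neq_snd matchV' rootV' ckV'; rewrite -ki eqxx.
move: yk xyV => -> xkV; exists x; split => //; apply: contra kj => xkV'.
have [xc] := matching_snd_inj matchV' xkV' ckV' erefl.
by have [_ /facet_inj ->] := matching_fst_inj matchV xkV cjV xc.
Qed.

(* The facets matched differently in [V] and [V'] would form an endless ascent in [V]. *)
Lemma sub_same_restrict : V \subset V'.
Proof.
pose D := [set j | [exists c, ((c, facet j) \in V) && ((c, facet j) \notin V')]].
have D0 : D = set0.
  apply/eqP/negPn/negP => D_ne.
  have /andP [/andP [_ acV] _] := optV.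
  apply: (acyclic_ascent_ends acV (S := facet @: D)).
    by case/set0Pn: D_ne => j jD; apply/set0Pn; exists (facet j); apply: imset_f.
  move=> _ /imsetP [j /[!inE] /existsP [c /andP [cjV cjV']] ->].
  have [k kj ckV'] := rematch_ridge cjV cjV'.
  have [c' [c'kV c'kV']] := rematch_facet cjV ckV' kj.
  exists (facet k); first by apply: imset_f; rewrite inE; apply/existsP; exists c'; rewrite c'kV.
  exists c; have /andP [-> ck] := modified_rel_down_up matchV cjV (matching_edge matchV' ckV')
    (contra_neq (@facet_inj k j) kj).
  exact: connect1.
apply/subsetP => -[x y] xyV; have xy := matching_edge matchV xyV.
have /hasse_edgeP [_ yK _ _] := xy.
case/Delta_cases: yK => [yL | yt | [j yj]].
- have : (x, y) \in restrict L V by rewrite inE xyV yL (hasse_edge_skeleton xy yL).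
  by rewrite same_restrict inE => /andP [].
- by rewrite (matching_snd_inj matchV xyV rootV yt).
apply: contraT => xyV'; have : j \in D by rewrite inE; apply/existsP; exists x; rewrite -yj xyV.
by rewrite D0 inE.
Qed.

End Uniqueness.

Definition root_of V : T := odflt apex [pick j | (facet j, top) \in V].

Lemma root_of_eq V j : optimal K V -> (facet j, top) \in V -> root_of V = j.
Proof.
move=> /andP [/andP [matchV _] _] jV; rewrite /root_of; case: pickP => [k kV | /(_ j)].
  by have [/facet_inj] := matching_snd_inj matchV kV jV erefl.
by rewrite jV.
Qed.

Lemma root_ofP V : optimal K V -> (facet (root_of V), top) \in V.
Proof. by move=> optV; have [j jV] := optimal_root optV; rewrite (root_of_eq optV jV). Qed.

Lemma card_fiber W : optimal L W ->
  #|[set V | optimal K V && (restrict L V == W)]| = n.+1.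
Proof.
move=> optW; set F := [set V | _].
have inj : {in F &, injective root_of}.
  move=> V V'; rewrite !inE => /andP [optV /eqP rV] /andP [optV' /eqP rV'] same_root.
  have rootV := root_ofP optV; have rootV' := root_ofP optV'; rewrite same_root in rootV.
  have same : restrict L V = restrict L V' by rewrite rV rV'.
  by apply/eqP; rewrite eqEsubset (sub_same_restrict optV optV' same rootV rootV')
    (sub_same_restrict optV' optV (esym same) rootV' rootV).
have onto : root_of @: F = setT.
  apply/setP => j; rewrite inE; apply/imsetP.
  have [par [h tree]] := critical_ridge_tree_exists j (proj1 (andP optW)).
  exists (extension W j par).
    by rewrite inE (extension_optimal optW tree) (restrict_extension j par optW) eqxx.
  by rewrite (root_of_eq (extension_optimal optW tree) (extension_root W j par)).
by rewrite -(card_in_imset inj) onto cardsT card_ord.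
Qed.

Lemma M_top_skeleton : M_top_simplex L =1 optimal L.
Proof.
apply: (M_top_simplexE (acyclic_matching_restrict skeleton_sub cone_acyclic)).
have max_apex : (ord_max : T) != apex by rewrite -(inj_eq val_inj) /= -lt0n.
apply/set0Pn; exists ([set ord_max], apex |: [set ord_max]); rewrite inE; apply/and3P; split.
- apply/coneP; exists [set ord_max] => //; rewrite in_set1 (eq_sym apex) max_apex andbT.
  by apply/set0Pn; exists ord_max; rewrite set11.
- by rewrite mem_skeleton cards1; lia.
by rewrite mem_skeleton cardsU1 in_set1 (eq_sym apex) max_apex cards1; lia.
Qed.

Lemma f_eq : f n = n.+1 * #|[set W | M_top_simplex L W]|.
Proof.
rewrite /f -sum1_card (partition_big (restrict L) (fun W => optimal L W)); last first.
  by move=> V; rewrite inE => /optimal_restrict.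
rewrite (eq_bigr (fun _ => n.+1)) => [|W optW]; last first.
  by apply: etrans (card_fiber optW); rewrite -sum1_card; apply: eq_bigl => V; rewrite !inE.
by rewrite sum_nat_const mulnC; congr (_ * _); apply: eq_card => W; rewrite !inE M_top_skeleton.
Qed.

End Simplex.

Theorem mainTheorem5 (n : nat) (hn : 3 <= n) :
  (forall V : {set {set 'I_n.+1} * {set 'I_n.+1}},
     optimal (Delta n) V ->
     optimal (skeleton (Delta n) (n - 2)) (restrict (skeleton (Delta n) (n - 2)) V))
  /\
  (forall W : {set {set 'I_n.+1} * {set 'I_n.+1}},
     optimal (skeleton (Delta n) (n - 2)) W ->
     exists V, optimal (Delta n) V /\ restrict (skeleton (Delta n) (n - 2)) V = W)
  /\
  (forall W : {set {set 'I_n.+1} * {set 'I_n.+1}},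
     optimal (skeleton (Delta n) (n - 2)) W ->
     #|[set V | optimal (Delta n) V &&
                (restrict (skeleton (Delta n) (n - 2)) V == W)]| = n.+1)
  /\
  f n = n.+1 * #|[set W : {set {set 'I_n.+1} * {set 'I_n.+1}} |
                  M_top_simplex (skeleton (Delta n) (n - 2)) W]|.
Proof.
split; first exact: optimal_restrict.
split.
  move=> W optW; have /card_gt0P [V] : 0 < #|[set V | optimal (Delta n) V &&
      (restrict (skeleton (Delta n) (n - 2)) V == W)]| by rewrite card_fiber.
  by rewrite inE => /andP [optV /eqP rV]; exists V.
by split; [exact: card_fiber | exact: f_eq].
Qed.
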